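(* Let $l\ge 4$ be an integer, let $G_1$ be any graph (possibly a loopless multigraph), and let $G=K_1\vee (P_l\cup G_1)$. Then: (i) if $l\ge 5$, then for every $s$ with $3\le s\le l-2$, $$\sigma_1(G)<\sigma_1\big(K_1\vee(C_s\cup P_{l-s}\cup G_1)\big);$$ (ii) if $l=4$, then $\sigma_1(G)<\sigma_1\big(K_1\vee(C_2\cup P_2\cup G_1)\big)$, where $C_2$ is the digon.
   Context: $P_l$ is the path and $C_s$ the cycle on $l$ resp. $s$ vertices; $C_2$ is the digon (two vertices joined by two parallel edges). For loopless multigraphs the degree of a vertex is the number of incident edges and the $(u,v)$ entry of the adjacency matrix $A$ is the number of edges between $u$ and $v$. $Q=A+D$, $D$ the diagonal degree matrix, and $\sigma_1$ denotes the largest eigenvalue of $Q$. $K_1\vee H$ adds one vertex adjacent to every vertex of $H$; $\cup$ is disjoint union. *)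

(* Loopless multigraphs are given by their adjacency matrices
   'M[nat]_k (entry (u,v) = number of edges between u and v). *)
From HB Require Import structures.
From mathcomp Require Import all_boot all_order all_algebra.
Set Implicit Arguments. Unset Strict Implicit. Unset Printing Implicit Defensive.
Import Order.TTheory GRing.Theory Num.Theory.

Definition loopless_multigraph (k : nat) (A : 'M[nat]_k) : Prop :=
  (forall i j, A i j = A j i) /\ (forall i, A i i = 0%N).

Definition dunion (m p : nat) (A : 'M[nat]_m) (B : 'M[nat]_p) : 'M[nat]_(m + p) :=
  block_mx A (const_mx 0%N) (const_mx 0%N) B.

Definition join1 (m : nat) (A : 'M[nat]_m) : 'M[nat]_(1 + m) :=
  block_mx (const_mx 0%N) (const_mx 1%N) (const_mx 1%N) A.

Definition path_adj (l : nat) : 'M[nat]_l :=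
  \matrix_(i, j) (((i.+1 == j) || (j.+1 == i)) : nat).

(* the cycle C_s on vertices 0,...,s-1 (i ~ i+1 mod s); for s = 2 this
   gives the digon (entry 2 between the two vertices) *)
Definition cycle_adj (s : nat) : 'M[nat]_s :=
  \matrix_(i, j) ((j == (i.+1 %% s) :> nat) + (i == (j.+1 %% s) :> nat))%N.

Local Open Scope ring_scope.

Definition signless_laplacian (R : numDomainType) (k : nat) (A : 'M[nat]_k)
  : 'M[R]_k :=
  \matrix_(i, j) ((A i j)%:R + (i == j)%:R * (\sum_(v < k) (A i v))%:R).

Definition largest_eigenvalue (R : numFieldType) (k : nat) (M : 'M[R]_k) (x : R)
  : Prop :=
  eigenvalue M x /\ (forall y, eigenvalue M y -> y <= x).

From HB Require Import structures.
From mathcomp Require Import all_boot all_order all_algebra.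
From mathcomp Require Import complex ring lra zify.
Set Implicit Arguments. Unset Strict Implicit. Unset Printing Implicit Defensive.
Import Order.TTheory GRing.Theory Num.Theory.
Local Open Scope ring_scope.

(* Let [x] be the top eigenvalue of [Q] for [K_1 \/ (P_l \u G_1)], with an
   eigenvector [u] that (by Perron) is nonnegative and positive at the apex.
   Since [x > 5] we can write [x = 3 + r + r^-1] with [r > 1]; then the
   equation [x al = 1 + (Q(P_l) + I) al] has an explicit solution
   ([path_weight]), and on a cycle the corresponding equation has the constant
   solution [r / (r - 1)^2].  By symmetry of [Q], the sum of [u] over the path
   is [u apex] times the sum of [al].  Replacing the path part of [u] by
   [u apex] times the solution for [C_s \u P_(l-s)] gives a test vector whose
   Rayleigh quotient for the new graph exceeds [x] by a positive multiple of
   the gain in total weight, which is positive by a direct computation. *)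

Section QuadraticForms.
Variable R : rcfType.
Implicit Types (k : nat).

Definition bform k (M : 'M[R]_k) (f g : 'I_k -> R) := \sum_i \sum_j f i * M i j * g j.
Definition qform k (M : 'M[R]_k) (f : 'I_k -> R) := bform M f f.
Definition sqnorm k (f : 'I_k -> R) := \sum_i f i ^+ 2.
Definition vmul k (M : 'M[R]_k) (f : 'I_k -> R) j := \sum_i f i * M i j.
Definition delta k (j : 'I_k) (i : 'I_k) : R := (i == j)%:R.

Lemma bformE k (M : 'M[R]_k) f g : bform M f g = \sum_j vmul M f j * g j.
Proof. by rewrite /bform exchange_big; apply: eq_bigr => j _; rewrite mulr_suml. Qed.

Lemma qformE k (M : 'M[R]_k) f : qform M f = \sum_j vmul M f j * f j.
Proof. exact: bformE. Qed.

Lemma sum_mul_delta k (F : 'I_k -> R) j : \sum_i F i * delta j i = F j.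
Proof.
rewrite (bigD1 j) //= /delta eqxx mulr1 big1 ?addr0 // => i ne.
by rewrite (negbTE ne) mulr0.
Qed.

Lemma sqnorm_gt0 k (f : 'I_k -> R) j : f j != 0 -> 0 < sqnorm f.
Proof.
move=> fj; rewrite /sqnorm (bigD1 j) //=.
by rewrite ltr_pwDl ?sumr_ge0 // => [|i _]; rewrite ?sqr_ge0 // lt_def sqrf_eq0 fj sqr_ge0.
Qed.

Lemma eigenvalue_vmul k (M : 'M[R]_k) x : eigenvalue M x ->
  exists2 f : 'I_k -> R, (forall j, vmul M f j = x * f j) & exists j, f j != 0.
Proof.
move=> /eigenvalueP [v vM vn0]; exists (fun j => v 0 j).
  by move=> j; have /matrixP /(_ 0 j) := vM; rewrite !mxE => <-.
apply/existsP; apply: contraR vn0 => /existsPn v0; apply/eqP/rowP => j.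
by rewrite mxE; apply/eqP; rewrite -[_ == 0]negbK.
Qed.

Lemma qform_eigen k (M : 'M[R]_k) x f : (forall j, vmul M f j = x * f j) ->
  qform M f = x * sqnorm f.
Proof.
by move=> Mf; rewrite qformE /sqnorm mulr_sumr; apply: eq_bigr => j _; rewrite Mf; ring.
Qed.

Lemma rayleigh_bound_eigenvalue k (M : 'M[R]_k) X y :
  (forall g, qform M g <= X * sqnorm g) -> eigenvalue M y -> y <= X.
Proof.
move=> bound /eigenvalue_vmul [f Mf [j fj]].
by have := bound f; rewrite (qform_eigen Mf) ler_pM2r // (sqnorm_gt0 fj).
Qed.

Lemma quadratic_ge0_linear_coef (c d : R) :
  (forall e, 0 <= e * c + e ^+ 2 * d) -> c = 0.
Proof.
move=> ge0; have [d_ge0|d_lt0] := lerP 0 d; last by have := ge0 1; have := ge0 (-1); nra.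
have d1_gt0 : 0 < d + 1 by lra.
have := ge0 (- c / (2 * (d + 1))).
rewrite (_ : _ + _ = - (c ^+ 2 * (d + 2)) / (2 * (d + 1)) ^+ 2); last first.
  by field; rewrite gt_eqF.
rewrite pmulr_lge0 ?invr_gt0 ?exprn_gt0 ?mulr_gt0 // oppr_ge0 => c2_le0.
by apply/eqP; rewrite -sqrf_eq0 eq_le sqr_ge0 andbT; nra.
Qed.

Lemma qform_add_scale k (M : 'M[R]_k) f g e : qform M (fun i => f i + e * g i) =
  qform M f + e * (bform M f g + bform M g f) + e ^+ 2 * qform M g.
Proof.
rewrite /qform /bform mulrDr !mulr_sumr -!big_split /=; apply: eq_bigr => i _.
by rewrite !mulr_sumr -!big_split /=; apply: eq_bigr => j _; ring.
Qed.

Lemma sqnorm_add_scale k (f g : 'I_k -> R) e : sqnorm (fun i => f i + e * g i) =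
  sqnorm f + e * (2 * \sum_i f i * g i) + e ^+ 2 * sqnorm g.
Proof. by rewrite /sqnorm !mulr_sumr -!big_split /=; apply: eq_bigr => i _; ring. Qed.

Lemma qform_delta k (M : 'M[R]_k) j : qform M (delta j) = M j j.
Proof. by rewrite qformE sum_mul_delta /vmul (eq_bigr _ (fun i _ => mulrC _ _)) sum_mul_delta. Qed.

Lemma sqnorm_delta k (j : 'I_k) : sqnorm (delta j) = 1.
Proof.
rewrite /sqnorm (eq_bigr (fun i => 1 * delta j i)) ?sum_mul_delta // => i _.
by rewrite /delta mul1r; case: (i == j); rewrite ?expr1n ?expr0n.
Qed.

Section RayleighMaximizer.
Variables (k : nat) (M : 'M[R]_k) (X : R).
Hypothesis Msym : forall i j, M i j = M j i.
Hypothesis bound : forall g, qform M g <= X * sqnorm g.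

Lemma bformC f g : bform M f g = bform M g f.
Proof.
rewrite /bform exchange_big; apply: eq_bigr => i _; apply: eq_bigr => j _.
by rewrite Msym; ring.
Qed.

(* Perturbing a maximizer [f] along [delta j] gives a quadratic in [e] that
   is nonnegative and vanishes at [e = 0]: its linear coefficient is zero. *)
Lemma rayleigh_max_eigenvector f : qform M f = X * sqnorm f ->
  forall j, vmul M f j = X * f j.
Proof.
move=> fmax j.
have Mfj : bform M f (delta j) = vmul M f j by rewrite bformE sum_mul_delta.
suff : 2 * (X * f j - vmul M f j) = 0 by lra.
apply: (@quadratic_ge0_linear_coef _ (X - M j j)) => e.
have := bound (fun i => f i + e * delta j i).
rewrite qform_add_scale sqnorm_add_scale qform_delta sqnorm_delta fmax.
rewrite [bform M (delta j) f]bformC Mfj sum_mul_delta -subr_ge0.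
by congr (0 <= _); ring.
Qed.

Lemma abs_eigenvector_nonneg f :
  (forall i j, 0 <= M i j) -> (forall j, vmul M f j = X * f j) ->
  forall j, vmul M (fun i => `|f i|) j = X * `|f j|.
Proof.
move=> M_ge0 Mf; apply: rayleigh_max_eigenvector; apply/eqP; rewrite eq_le bound.
have -> : sqnorm (fun i => `|f i|) = sqnorm f.
  by apply: eq_bigr => i _; rewrite -normrX ger0_norm ?sqr_ge0.
rewrite -(qform_eigen Mf); apply: ler_sum => i _; apply: ler_sum => j _.
by rewrite (le_trans (ler_norm _)) // !normrM (ger0_norm (M_ge0 i j)).
Qed.

End RayleighMaximizer.
End QuadraticForms.

Section SymmetricTopEigenvalue.
Variables (R : rcfType) (k : nat) (M : 'M[R]_k.+1).
Hypothesis Msym : forall i j, M i j = M j i.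
Local Notation rc := (real_complex R).

Let Mc := map_mx rc M.
Let P := spectralmx Mc.
Let d := spectral_diag Mc.

Lemma real_complex_conj (a : R) : (rc a)^* = rc a.
Proof. by apply/eqP; rewrite eq_complex /= oppr0 !eqxx. Qed.

Lemma complexify_hermitian : Mc \is hermsymmx.
Proof.
apply/is_hermitianmxP; rewrite expr0 scale1r.
by apply/matrixP=> i j; rewrite !mxE /= Msym real_complex_conj.
Qed.

Let P_unitary : P \is unitarymx := spectral_unitarymx Mc.

Lemma complexify_spectral i j : Mc i j = \sum_l (P l i)^* * d 0 l * P l j.
Proof.
have /orthomx_spectralP -> := hermitian_normalmx complexify_hermitian.
rewrite invmx_unitary // mul_mx_diag !mxE; apply: eq_bigr => l _; rewrite !mxE //.
Qed.

Lemma spectral_orthonormal i j : \sum_l (P l i)^* * P l j = (i == j)%:R.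
Proof.
have := mulVmx (unitarymx_unit P_unitary); rewrite invmx_unitary //.
by move=> /matrixP /(_ i j); rewrite !mxE => <-; apply: eq_bigr => l _; rewrite !mxE.
Qed.

Lemma spectral_diag_real i : d 0 i = (complex.Re (d 0 i))%:C%C.
Proof.
rewrite complexRe; apply/esym/Creal_ReP.
exact: (mxOverP (hermitian_spectral_diag_real complexify_hermitian)).
Qed.

Let i0 := ([arg max_(i > (ord0 : 'I_k.+1)) complex.Re (d 0 i)])%O.
Let top := complex.Re (d 0 i0).

Lemma spectral_diag_le_top i : complex.Re (d 0 i) <= top.
Proof. by rewrite /top /i0; case: arg_maxP => //= j _; apply. Qed.

Lemma eigenvalue_top : eigenvalue M top.
Proof.
rewrite eigenvalue_root_char -(fmorph_root rc) map_char_poly -eigenvalue_root_char.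
rewrite -/Mc [X in eigenvalue _ X](_ : _ = d 0 i0); last exact/esym/spectral_diag_real.
apply/eigenvalueP; exists (row i0 P).
  have /orthomx_spectralP {1}-> := hermitian_normalmx complexify_hermitian.
  rewrite !mulmxA -row_mul mulmxV ?unitarymx_unit // row1 -rowE row_diag_mx.
  by rewrite -scalemxAl -rowE.
apply: contraTneq isT => P0; have : row i0 (P *m invmx P) = 0.
  by rewrite row_mul P0 mul0mx.
rewrite mulmxV ?unitarymx_unit // row1 => /rowP /(_ i0); rewrite !mxE eqxx /= eqxx.
by move/eqP; rewrite oner_eq0.
Qed.

(* Writing [w l = \sum_j P l j * f j], both sides of the inequality become
   sums over [l] of [|w l|^2] weighted by [d 0 l] and by [top]. *)
Lemma qform_le_top f : qform M f <= top * sqnorm f.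
Proof.
pose w l := \sum_j P l j * rc (f j).
have wJ l : (w l)^* = \sum_i (P l i)^* * rc (f i).
  rewrite rmorph_sum; apply: eq_bigr => i _; rewrite rmorphM.
  by congr (_ * _); exact: real_complex_conj.
have lhsE : rc (qform M f) = \sum_l d 0 l * ((w l)^* * w l).
  transitivity (\sum_i \sum_j rc (f i) * Mc i j * rc (f j)).
    rewrite rmorph_sum; apply: eq_bigr => i _; rewrite rmorph_sum.
    by apply: eq_bigr => j _; rewrite !rmorphM mxE.
  under eq_bigr do under eq_bigr do rewrite complexify_spectral mulr_sumr mulr_suml.
  under eq_bigr do rewrite exchange_big.
  rewrite exchange_big; apply: eq_bigr => l _.
  rewrite wJ mulr_suml mulr_sumr; apply: eq_bigr => i _.
  by rewrite /w !big_distrr; apply: eq_bigr => j _ /=; ring.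
have rhsE : rc (top * sqnorm f) = top%:C%C * \sum_l (w l)^* * w l.
  rewrite rmorphM rmorph_sum; congr (_ * _); symmetry.
  transitivity (\sum_l \sum_i \sum_j (P l i)^* * P l j * (rc (f i) * rc (f j))).
    apply: eq_bigr => l _; rewrite wJ /w big_distrl; apply: eq_bigr => i _.
    by rewrite big_distrr; apply: eq_bigr => j _ /=; ring.
  rewrite exchange_big; apply: eq_bigr => i _; rewrite exchange_big /=.
  under eq_bigr do rewrite -big_distrl /= spectral_orthonormal.
  rewrite (bigD1 i) //= big1 => [|j ne]; last by rewrite eq_sym (negbTE ne) mul0r.
  by rewrite eqxx mul1r addr0 rmorphXn.
rewrite -lecR lhsE rhsE mulr_sumr; apply: ler_sum => l _; apply: ler_wpM2r.
  by rewrite mulrC mul_conjC_ge0.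
by rewrite spectral_diag_real lecR spectral_diag_le_top.
Qed.

Lemma symmetric_top_eigenvalue :
  exists2 x, largest_eigenvalue M x & forall f, qform M f <= x * sqnorm f.
Proof.
exists top; last exact: qform_le_top.
by split=> [|y]; [exact: eigenvalue_top | apply: rayleigh_bound_eigenvalue qform_le_top].
Qed.

End SymmetricTopEigenvalue.

Definition deg k (G : 'M[nat]_k) i : nat := \sum_(v < k) G i v.

Lemma signless_laplacianE (R : numDomainType) k (G : 'M[nat]_k) u v :
  signless_laplacian R G u v = (G u v)%:R + (u == v)%:R * (deg G u)%:R.
Proof. by rewrite mxE. Qed.

Section JoinBlock.
Variable R : rcfType.

(* On the vertices of [G], the signless Laplacian of [K_1 \/ (G \u H)] acts
   as [f apex + join_block G f]: the extra [1] is the edge to the apex. *)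
Definition join_block k (G : 'M[nat]_k) (f : 'I_k -> R) j :=
  \sum_i f i * (G i j)%:R + (1 + deg G j)%:R * f j.

Lemma eq_join_block k (G : 'M[nat]_k) (f g : 'I_k -> R) :
  f =1 g -> join_block G f =1 join_block G g.
Proof.
by move=> fg j; rewrite /join_block fg; congr (_ + _); apply: eq_bigr => i _; rewrite fg.
Qed.

Lemma join_blockZ k (G : 'M[nat]_k) (f : 'I_k -> R) c j :
  join_block G (fun i => c * f i) j = c * join_block G f j.
Proof.
rewrite /join_block mulrDr mulr_sumr mulrCA; congr (_ + _).
by apply: eq_bigr => i _; rewrite mulrA.
Qed.

Lemma join_block_sym k (G : 'M[nat]_k) (f g : 'I_k -> R) :
  (forall i j, G i j = G j i) ->
  \sum_i f i * join_block G g i = \sum_i g i * join_block G f i.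
Proof.
move=> Gsym; rewrite /join_block.
under eq_bigr do rewrite mulrDr mulr_sumr.
under [RHS]eq_bigr do rewrite mulrDr mulr_sumr.
rewrite !big_split /=; congr (_ + _).
  rewrite exchange_big; apply: eq_bigr => i _; apply: eq_bigr => j _.
  by rewrite Gsym; ring.
by apply: eq_bigr => i _; ring.
Qed.

(* Pair the first equation with [al] and the second with [a]; [join_block G]
   is symmetric. *)
Lemma sum_join_block_eigen k (G : 'M[nat]_k) (x u0 : R) (a al : 'I_k -> R) :
  (forall i j, G i j = G j i) ->
  (forall i, x * a i = u0 + join_block G a i) ->
  (forall i, x * al i = 1 + join_block G al i) ->
  \sum_i a i = u0 * \sum_i al i.
Proof.
move=> Gsym Ha Hal.
have alE i : join_block G al i = x * al i - 1 by rewrite Hal addrC addKr.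
have aE i : join_block G a i = x * a i - u0 by rewrite Ha addrC addKr.
have -> : \sum_i a i = \sum_i x * a i * al i - \sum_i a i * join_block G al i.
  by rewrite -sumrB; apply: eq_bigr => i _; rewrite alE; ring.
have -> : u0 * \sum_i al i = \sum_i x * a i * al i - \sum_i al i * join_block G a i.
  by rewrite mulr_sumr -sumrB; apply: eq_bigr => i _; rewrite aE; ring.
by rewrite join_block_sym.
Qed.

End JoinBlock.

Lemma sum_join_block_one (R : rcfType) m (B : 'M[nat]_m) :
  \sum_i join_block B (fun _ => 1 : R) i = (m + 2 * \sum_i deg B i)%N%:R.
Proof.
rewrite /join_block big_split /= natrD mul2n -addnn natrD addrCA; congr (_ + _).
  rewrite exchange_big natr_sum; apply: eq_bigr => i _.
  by rewrite /deg natr_sum; apply: eq_bigr => j _; rewrite mul1r.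
rewrite -[m in m%:R]card_ord -sumr_const natr_sum -big_split /=.
by apply: eq_bigr => i _; rewrite mulr1 natrD.
Qed.

Section Dunion.
Variable R : rcfType.

Lemma dunion_sym s p (G : 'M[nat]_s) (H : 'M[nat]_p) :
  (forall i j, G i j = G j i) -> (forall i j, H i j = H j i) ->
  forall u v, dunion G H u v = dunion G H v u.
Proof.
move=> Gsym Hsym u v; rewrite -(splitK u) -(splitK v).
by case: (split u) => a; case: (split v) => b;
  rewrite /dunion ?block_mxEul ?block_mxEur ?block_mxEdl ?block_mxEdr ?mxE.
Qed.

Lemma join_block_dunion_l s p (G : 'M[nat]_s) (H : 'M[nat]_p) (f : 'I_(s + p) -> R) i :
  join_block (dunion G H) f (lshift p i) = join_block G (fun i' => f (lshift p i')) i.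
Proof.
rewrite /join_block /deg !big_split_ord /=.
have -> : \sum_(j < p) f (rshift s j) * (dunion G H (rshift s j) (lshift p i))%:R = 0.
  by apply: big1 => j _; rewrite /dunion block_mxEdl mxE mulr0.
have -> : (\sum_(j < p) dunion G H (lshift p i) (rshift s j))%N = 0%N.
  by apply: big1 => j _; rewrite /dunion block_mxEur mxE.
rewrite addr0 addn0; congr (_ + (1 + _)%:R * _); apply: eq_bigr => j _.
  by rewrite /dunion block_mxEul.
by rewrite /dunion block_mxEul.
Qed.

Lemma join_block_dunion_r s p (G : 'M[nat]_s) (H : 'M[nat]_p) (f : 'I_(s + p) -> R) i :
  join_block (dunion G H) f (rshift s i) = join_block H (fun i' => f (rshift s i')) i.
Proof.
rewrite /join_block /deg !big_split_ord /=.
have -> : \sum_(j < s) f (lshift p j) * (dunion G H (lshift p j) (rshift s i))%:R = 0.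
  by apply: big1 => j _; rewrite /dunion block_mxEur mxE mulr0.
have -> : (\sum_(j < s) dunion G H (rshift s i) (lshift p j))%N = 0%N.
  by apply: big1 => j _; rewrite /dunion block_mxEdl mxE.
rewrite add0r add0n; congr (_ + (1 + _)%:R * _); apply: eq_bigr => j _.
  by rewrite /dunion block_mxEdr.
by rewrite /dunion block_mxEdr.
Qed.
End Dunion.

Section DunionVec.
Variables (R : Type) (s p : nat) (a : 'I_s -> R) (b : 'I_p -> R).

Definition dunion_vec (k : 'I_(s + p)) : R :=
  match split k with inl i => a i | inr j => b j end.

Lemma dunion_vec_l i : dunion_vec (lshift p i) = a i.
Proof. by rewrite /dunion_vec -[lshift _ _]/(unsplit (inl _ _)) unsplitK. Qed.

Lemma dunion_vec_r j : dunion_vec (rshift s j) = b j.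
Proof. by rewrite /dunion_vec -[rshift _ _]/(unsplit (inr _ _)) unsplitK. Qed.

End DunionVec.

Lemma sum_dunion_vec (R : rcfType) s p (a : 'I_s -> R) (b : 'I_p -> R) :
  \sum_k dunion_vec a b k = \sum_i a i + \sum_j b j.
Proof.
by rewrite big_split_ord; congr (_ + _); apply: eq_bigr => i _; rewrite ?dunion_vec_l ?dunion_vec_r.
Qed.

Section JoinVertices.
Variables (m n : nat).

Definition apex : 'I_(1 + (m + n)) := lshift (m + n) (ord0 : 'I_1).
Definition lvtx (i : 'I_m) : 'I_(1 + (m + n)) := rshift 1 (lshift n i).
Definition rvtx (j : 'I_n) : 'I_(1 + (m + n)) := rshift 1 (rshift m j).

Lemma big_join_vtx (T : Type) (idx : T) (op : Monoid.com_law idx)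
    (F : 'I_(1 + (m + n)) -> T) :
  \big[op/idx]_k F k =
  op (op (F apex) (\big[op/idx]_i F (lvtx i))) (\big[op/idx]_j F (rvtx j)).
Proof. by rewrite big_split_ord big_ord1 big_split_ord /= Monoid.mulmA. Qed.

Lemma join_vtxP k : [\/ k = apex, exists i, k = lvtx i | exists j, k = rvtx j].
Proof.
rewrite -(splitK k); case: (split k) => [k0|k1] /=.
  by apply: Or31; rewrite /apex (ord1 k0).
rewrite -(splitK k1); case: (split k1) => [i|j] /=; [apply: Or32 | apply: Or33].
  by exists i.
by exists j.
Qed.

Lemma lvtx_apex i : (lvtx i == apex) = false.
Proof. by apply/negbTE/eqP => /(congr1 val). Qed.
Lemma rvtx_apex j : (rvtx j == apex) = false.
Proof. by apply/negbTE/eqP => /(congr1 val). Qed.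
Lemma lvtx_rvtx i j : (lvtx i == rvtx j) = false.
Proof.
apply/negbTE/eqP => /(congr1 val) /= /eqP; rewrite eqn_add2l => /eqP ij.
by move: (ltn_ord i); rewrite ij ltnNge leq_addr.
Qed.
Lemma apex_lvtx i : (apex == lvtx i) = false. Proof. by rewrite eq_sym lvtx_apex. Qed.
Lemma apex_rvtx j : (apex == rvtx j) = false. Proof. by rewrite eq_sym rvtx_apex. Qed.
Lemma rvtx_lvtx j i : (rvtx j == lvtx i) = false. Proof. by rewrite eq_sym lvtx_rvtx. Qed.
Lemma eq_lvtx i i' : (lvtx i == lvtx i') = (i == i').
Proof.
apply/eqP/eqP => [/(congr1 val) /= /eqP|-> //]; rewrite eqn_add2l => /eqP.
exact: val_inj.
Qed.
Lemma eq_rvtx j j' : (rvtx j == rvtx j') = (j == j').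
Proof.
apply/eqP/eqP => [/(congr1 val) /= /eqP|-> //]; rewrite !eqn_add2l => /eqP.
exact: val_inj.
Qed.

Definition join_vec (R : Type) (u : R) (a : 'I_m -> R) (b : 'I_n -> R) :
  'I_(1 + (m + n)) -> R := dunion_vec (fun _ => u) (dunion_vec a b).

Section JoinVec.
Variables (R : Type) (u : R) (a : 'I_m -> R) (b : 'I_n -> R).

Lemma join_vec_apex : join_vec u a b apex = u.
Proof. exact: dunion_vec_l. Qed.

Lemma join_vec_lvtx i : join_vec u a b (lvtx i) = a i.
Proof. by rewrite /join_vec /lvtx dunion_vec_r dunion_vec_l. Qed.

Lemma join_vec_rvtx j : join_vec u a b (rvtx j) = b j.
Proof. by rewrite /join_vec /rvtx !dunion_vec_r. Qed.

End JoinVec.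

Variables (B : 'M[nat]_m) (A : 'M[nat]_n).
Local Notation J := (join1 (dunion B A)).

Lemma join_apex_apex : J apex apex = 0%N.
Proof. by rewrite /join1 block_mxEul mxE. Qed.
Lemma join_apex_lvtx i : J apex (lvtx i) = 1%N.
Proof. by rewrite /join1 block_mxEur mxE. Qed.
Lemma join_apex_rvtx j : J apex (rvtx j) = 1%N.
Proof. by rewrite /join1 block_mxEur mxE. Qed.
Lemma join_lvtx_apex i : J (lvtx i) apex = 1%N.
Proof. by rewrite /join1 block_mxEdl mxE. Qed.
Lemma join_rvtx_apex j : J (rvtx j) apex = 1%N.
Proof. by rewrite /join1 block_mxEdl mxE. Qed.
Lemma join_lvtx_lvtx i i' : J (lvtx i) (lvtx i') = B i i'.
Proof. by rewrite /join1 block_mxEdr /dunion block_mxEul. Qed.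
Lemma join_lvtx_rvtx i j : J (lvtx i) (rvtx j) = 0%N.
Proof. by rewrite /join1 block_mxEdr /dunion block_mxEur mxE. Qed.
Lemma join_rvtx_lvtx j i : J (rvtx j) (lvtx i) = 0%N.
Proof. by rewrite /join1 block_mxEdr /dunion block_mxEdl mxE. Qed.
Lemma join_rvtx_rvtx j j' : J (rvtx j) (rvtx j') = A j j'.
Proof. by rewrite /join1 block_mxEdr /dunion block_mxEdr. Qed.

Definition joinE := (join_apex_apex, join_apex_lvtx, join_apex_rvtx,
  join_lvtx_apex, join_rvtx_apex, join_lvtx_lvtx, join_lvtx_rvtx,
  join_rvtx_lvtx, join_rvtx_rvtx).

Lemma deg_join_apex : deg J apex = (m + n)%N.
Proof.
rewrite /deg big_join_vtx /= joinE (eq_bigr (fun=> 1%N) (fun i _ => join_apex_lvtx i)).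
by rewrite (eq_bigr (fun=> 1%N) (fun j _ => join_apex_rvtx j)) !sum_nat_const !card_ord !muln1.
Qed.
Lemma deg_join_lvtx i : deg J (lvtx i) = (1 + deg B i)%N.
Proof.
rewrite /deg big_join_vtx /= joinE (eq_bigr _ (fun i' _ => join_lvtx_lvtx i i')).
suff -> : \sum_(j < n) J (lvtx i) (rvtx j) = 0%N by rewrite addn0.
by apply: big1 => j _; rewrite joinE.
Qed.
Lemma deg_join_rvtx j : deg J (rvtx j) = (1 + deg A j)%N.
Proof.
rewrite /deg big_join_vtx /= joinE (eq_bigr _ (fun j' _ => join_rvtx_rvtx j j')).
suff -> : \sum_(i < m) J (rvtx j) (lvtx i) = 0%N by rewrite addn0.
by apply: big1 => i _; rewrite joinE.
Qed.

Variable R : rcfType.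
Local Notation Q := (signless_laplacian R J).


Lemma vmul_join_apex F : vmul Q F apex =
  F apex * (m + n)%:R + \sum_i F (lvtx i) + \sum_j F (rvtx j).
Proof.
rewrite /vmul big_join_vtx /= signless_laplacianE !joinE deg_join_apex eqxx mul1r add0r.
by congr (_ + _ + _); apply: eq_bigr => k _;
  rewrite signless_laplacianE !joinE ?lvtx_apex ?rvtx_apex mul0r addr0 mulr1.
Qed.

Lemma vmul_join_lvtx F i0 :
  vmul Q F (lvtx i0) = F apex + join_block B (fun i => F (lvtx i)) i0.
Proof.
rewrite /vmul big_join_vtx /= signless_laplacianE !joinE apex_lvtx mul0r addr0 mulr1.
have -> : \sum_j F (rvtx j) * Q (rvtx j) (lvtx i0) = 0.
  by apply: big1 => j _; rewrite signless_laplacianE !joinE rvtx_lvtx mul0r addr0 mulr0.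
rewrite addr0.
congr (_ + _); rewrite /join_block (bigD1 i0) //= [in RHS](bigD1 i0) //=.
rewrite signless_laplacianE joinE eqxx.
rewrite deg_join_lvtx (eq_bigr (fun k => F (lvtx k) * (B k i0)%:R)) => [|k ne].
  by rewrite mul1r mulrDr addrAC [_ * F _]mulrC.
by rewrite signless_laplacianE joinE eq_lvtx (negbTE ne) mul0r addr0.
Qed.

Lemma vmul_join_rvtx F j0 :
  vmul Q F (rvtx j0) = F apex + join_block A (fun j => F (rvtx j)) j0.
Proof.
rewrite /vmul big_join_vtx /= signless_laplacianE !joinE apex_rvtx mul0r addr0 mulr1.
have -> : \sum_i F (lvtx i) * Q (lvtx i) (rvtx j0) = 0.
  by apply: big1 => i _; rewrite signless_laplacianE !joinE lvtx_rvtx mul0r addr0 mulr0.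
rewrite addr0.
congr (_ + _); rewrite /join_block (bigD1 j0) //= [in RHS](bigD1 j0) //=.
rewrite signless_laplacianE joinE eqxx.
rewrite deg_join_rvtx (eq_bigr (fun k => F (rvtx k) * (A k j0)%:R)) => [|k ne].
  by rewrite mul1r mulrDr addrAC [_ * F _]mulrC.
by rewrite signless_laplacianE joinE eq_rvtx (negbTE ne) mul0r addr0.
Qed.

Lemma qform_join_vec (x u0 : R) (al : 'I_m -> R) (b : 'I_n -> R) :
  (forall i, x * al i = 1 + join_block B al i) ->
  (forall j, x * b j = u0 + join_block A b j) ->
  let z := join_vec u0 (fun i => u0 * al i) b in
  qform Q z = x * sqnorm z +
    u0 * (u0 * (m + n)%:R + u0 * \sum_i al i + \sum_j b j - x * u0).
Proof.
move=> Hal Hb z.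
have zl i : vmul Q z (lvtx i) * z (lvtx i) = x * z (lvtx i) ^+ 2.
  rewrite vmul_join_lvtx (eq_join_block _ (join_vec_lvtx _ _ _)) join_blockZ.
  by rewrite /z join_vec_apex join_vec_lvtx -{1}[u0]mulr1 -mulrDr -Hal; ring.
have zr j : vmul Q z (rvtx j) * z (rvtx j) = x * z (rvtx j) ^+ 2.
  rewrite vmul_join_rvtx (eq_join_block _ (join_vec_rvtx _ _ _)).
  by rewrite /z join_vec_apex join_vec_rvtx -Hb; ring.
rewrite qformE /sqnorm !big_join_vtx /= (eq_bigr _ (fun i _ => zl i)).
have sl : \sum_i z (lvtx i) = u0 * \sum_i al i.
  by rewrite mulr_sumr; apply: eq_bigr => i _; rewrite /z join_vec_lvtx.
have sr : \sum_j z (rvtx j) = \sum_j b j by apply: eq_bigr => j _; rewrite /z join_vec_rvtx.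
rewrite (eq_bigr _ (fun j _ => zr j)) -!mulr_sumr vmul_join_apex sl sr /z join_vec_apex.
ring.
Qed.

Hypotheses (Bsym : forall i j, B i j = B j i) (Asym : forall i j, A i j = A j i).

Lemma join_sym u v : J u v = J v u.
Proof.
by case: (join_vtxP u) => [->|[i ->]|[j ->]]; case: (join_vtxP v) => [->|[i' ->]|[j' ->]];
  rewrite !joinE.
Qed.

Lemma signless_laplacian_join_sym u v : Q u v = Q v u.
Proof.
rewrite !signless_laplacianE join_sym; case: (eqVneq u v) => [-> //|uv].
by rewrite !mul0r.
Qed.

(* Perron: the absolute value of a top eigenvector is again one, and the apex
   equation [x u apex = (m + n) u apex + \sum_(k != apex) u k] shows that it
   cannot vanish at the apex. *)
Lemma join_top_eigenvector x :
  eigenvalue Q x -> (forall g, qform Q g <= x * sqnorm g) ->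
  exists2 u, (forall k, vmul Q u k = x * u k) & 0 < u apex.
Proof.
move=> /eigenvalue_vmul [f Qf [k fk]] bound.
have Q_ge0 u v : 0 <= Q u v by rewrite mxE addr_ge0 ?mulr_ge0 ?ler0n.
have Qu := abs_eigenvector_nonneg signless_laplacian_join_sym bound Q_ge0 Qf.
exists (fun k => `|f k|) => //; rewrite lt_def normr_ge0 andbT normr_eq0.
apply: contraNneq fk => fapex0; have := Qu apex.
rewrite vmul_join_apex fapex0 normr0 mulr0 mul0r add0r => /eqP.
rewrite paddr_eq0 ?sumr_ge0 // => /andP[/eqP l0 /eqP r0].
have [->|[i ->]|[j ->]] := join_vtxP k; first by rewrite fapex0.
  by rewrite -normr_eq0 (psumr_eq0P _ l0).
by rewrite -normr_eq0 (psumr_eq0P _ r0).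
Qed.

End JoinVertices.

(* Transplanting the top eigenvector of [K_1 \/ (B \u A)]: keep its values on
   the apex and on [A], and replace its values [u0 al] on [B] by [u0 al'] on
   [B'].  The Rayleigh quotient of [K_1 \/ (B' \u A)] then exceeds [x]. *)
Lemma join_top_lt (R : rcfType) m m' n (B : 'M[nat]_m) (B' : 'M[nat]_m')
    (A : 'M[nat]_n) (x y : R) (al : 'I_m -> R) (al' : 'I_m' -> R) :
  (forall i j, B i j = B j i) -> (forall i j, A i j = A j i) ->
  eigenvalue (signless_laplacian R (join1 (dunion B A))) x ->
  (forall g, qform (signless_laplacian R (join1 (dunion B A))) g <= x * sqnorm g) ->
  (forall i, x * al i = 1 + join_block B al i) ->
  (forall i, x * al' i = 1 + join_block B' al' i) ->
  m%:R + \sum_i al i < m'%:R + \sum_i al' i ->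
  (forall g, qform (signless_laplacian R (join1 (dunion B' A))) g <= y * sqnorm g) ->
  x < y.
Proof.
move=> Bsym Asym ex bound Hal Hal' lt_al bound'.
have [u Qu u0_gt0] := join_top_eigenvector Bsym Asym ex bound.
set u0 := u (apex m n) in u0_gt0 *.
pose b j := u (rvtx m j).
have Ha i : x * u (lvtx n i) = u0 + join_block B (fun i => u (lvtx n i)) i.
  by rewrite -Qu vmul_join_lvtx.
have Hb j : x * b j = u0 + join_block A b j by rewrite -Qu vmul_join_rvtx.
have apexE : x * u0 = u0 * (m + n)%:R + u0 * \sum_i al i + \sum_j b j.
  by rewrite -(sum_join_block_eigen Bsym Ha Hal) -Qu vmul_join_apex.
have := bound' (join_vec u0 (fun i => u0 * al' i) b).
rewrite (qform_join_vec Hal' Hb); set z := join_vec _ _ _ => le_y.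
have z_gt0 : 0 < sqnorm z.
  by apply: (@sqnorm_gt0 _ _ _ (apex m' n)); rewrite /z join_vec_apex gt_eqF.
rewrite -(ltr_pM2r z_gt0); apply: lt_le_trans le_y; rewrite ltrDl.
have -> : u0 * (u0 * (m' + n)%:R + u0 * \sum_i al' i + \sum_j b j - x * u0) =
    u0 * u0 * (m'%:R + \sum_i al' i - (m%:R + \sum_i al i)) by rewrite apexE !natrD; ring.
by rewrite !mulr_gt0 // subr_gt0.
Qed.

(* Test vector: [3] at the apex, [1] on [B], [0] on [A]. *)
Lemma join_top_gt5 (R : rcfType) m n (B : 'M[nat]_m) (A : 'M[nat]_n) (x : R) :
  (4 <= m)%N -> (0 < \sum_i deg B i)%N ->
  (forall g, qform (signless_laplacian R (join1 (dunion B A))) g <= x * sqnorm g) ->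
  5 < x.
Proof.
move=> m_ge4 D_gt0 bound.
set Q := signless_laplacian R _ in bound.
pose z := join_vec (3 : R) (fun _ : 'I_m => 1) (fun _ : 'I_n => 0).
have za : z (apex m n) = 3 by rewrite /z join_vec_apex.
have zl i : z (lvtx n i) = 1 by rewrite /z join_vec_lvtx.
have zr j : z (rvtx m j) = 0 by rewrite /z join_vec_rvtx.
have Qza : vmul Q z (apex m n) = 3 * (m + n)%:R + m%:R.
  rewrite vmul_join_apex za (eq_bigr _ (fun i _ => zl i)) (eq_bigr _ (fun j _ => zr j)).
  by rewrite big1_eq sumr_const card_ord addr0 mulrC -mulr_natr mul1r.
have Qzl : \sum_i vmul Q z (lvtx n i) * z (lvtx n i) = 3 * m%:R + (m + 2 * \sum_i deg B i)%N%:R.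
  rewrite -sum_join_block_one -[m in 3 * m%:R]card_ord -sumr_const mulr_sumr -big_split /=.
  by apply: eq_bigr => i _; rewrite zl mulr1 vmul_join_lvtx za (eq_join_block _ zl) mulr1.
have Qzr : \sum_j vmul Q z (rvtx m j) * z (rvtx m j) = 0.
  by apply: big1 => j _; rewrite zr mulr0.
have nzl : \sum_i z (lvtx n i) ^+ 2 = m%:R.
  by rewrite (eq_bigr (fun=> 1)) ?sumr_const ?card_ord // => i _; rewrite zl expr1n.
have nzr : \sum_j z (rvtx m j) ^+ 2 = 0.
  by apply: big1 => j _; rewrite zr expr0n.
have := bound z; rewrite qformE /sqnorm !big_join_vtx /= Qza Qzl Qzr nzl nzr za.
have hm : (4 : R) <= m%:R by rewrite (ler_nat R 4 m).
have hD : (1 : R) <= (\sum_i deg B i)%:R by rewrite (ler_nat R 1).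
have hn : (0 : R) <= n%:R by rewrite ler0n.
rewrite !natrD; nra.
Qed.




Section Cycle.
Variable R : rcfType.

Lemma cycle_adj_sym s i j : cycle_adj s i j = cycle_adj s j i.
Proof. by rewrite !mxE addnC. Qed.

Lemma deg_cycle_adj s (i : 'I_s) : deg (cycle_adj s) i = 2%N.
Proof.
have sum_eq1 (k : 'I_s) : (\sum_(j < s) ((j == k) : nat))%N = 1%N.
  by rewrite (bigD1 k) //= eqxx big1 // => j /negbTE ->.
rewrite /deg (eq_bigr (fun j => ((j == ordS i) : nat) + ((ordS j == i) : nat))%N).
  rewrite big_split /= sum_eq1 (eq_bigr (fun j => ((j == ord_pred i) : nat))) ?sum_eq1 //.
  by move=> j _; congr (nat_of_bool _); apply/eqP/eqP => [<-|->]; rewrite ?ordSK ?ord_predK.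
by move=> j _; rewrite mxE -!val_eqE /= (eq_sym (nat_of_ord i)).
Qed.

Lemma join_block_cycle_const s (c : R) (i : 'I_s) :
  join_block (cycle_adj s) (fun _ => c) i = 5 * c.
Proof.
rewrite /join_block -mulr_sumr -natr_sum.
under eq_bigr do rewrite cycle_adj_sym.
by rewrite -/(deg _ i) deg_cycle_adj; ring.
Qed.
Definition cycle_weight (r : R) := r / (r - 1) ^+ 2.

Lemma join_block_cycle_weight s r (i : 'I_s) : 1 < r ->
  (3 + r + r^-1) * cycle_weight r = 1 + join_block (cycle_adj s) (fun _ => cycle_weight r) i.
Proof.
move=> r_gt1; have r1_neq0 : r - 1 != 0 by rewrite subr_eq0 gt_eqF.
rewrite join_block_cycle_const /cycle_weight.
by field; rewrite r1_neq0 gt_eqF //; apply: lt_trans r_gt1.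
Qed.
End Cycle.

Section Path.
Variable R : rcfType.

Lemma path_adj_sym l i j : path_adj l i j = path_adj l j i.
Proof. by rewrite !mxE orbC. Qed.

Lemma sum_ord_eq_nat l k (g : nat -> R) :
  \sum_(j < l) g j * ((j : nat) == k)%:R = if (k < l)%N then g k else 0.
Proof.
case: ltnP => kl.
  rewrite (bigD1 (Ordinal kl)) //= eqxx mulr1 big1 ?addr0 // => j ne.
  suff /negbTE -> : (j : nat) != k by rewrite mulr0.
  by apply: contra ne => /eqP jk; apply/eqP/val_inj.
apply: big1 => j _; suff /negbTE -> : (j : nat) != k by rewrite mulr0.
by rewrite neq_ltn (leq_trans (ltn_ord j) kl).
Qed.

Lemma sum_deg_path_adj_gt0 l : (1 < l)%N -> (0 < \sum_i deg (path_adj l) i)%N.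
Proof.
move=> l_gt1; have l_gt0 : (0 < l)%N := ltnW l_gt1.
by rewrite (bigD1 (Ordinal l_gt1)) //= /deg (bigD1 (Ordinal l_gt0)) //= mxE.
Qed.

Lemma sum_path_adj_col l (g : nat -> R) (i : 'I_l) :
  \sum_(j < l) g j * (path_adj l j i)%:R =
  (if (0 < i)%N then g i.-1 else 0) + (if (i.+1 < l)%N then g i.+1 else 0).
Proof.
have pathE j : (path_adj l j i)%:R = ((j.+1 == i) : nat)%:R + ((i.+1 == j) : nat)%:R :> R.
  by rewrite mxE -natrD; case: eqP => [<-|]; case: eqP => //; lia.
under eq_bigr do rewrite pathE mulrDr.
rewrite big_split /=; congr (_ + _); last first.
  by under eq_bigr do rewrite eq_sym; rewrite sum_ord_eq_nat.
case: (posnP i) => [-> | i_gt0]; first by apply: big1 => j _; rewrite mulr0.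
rewrite -(ltn_predK i_gt0); under eq_bigr do rewrite eqSS.
by rewrite sum_ord_eq_nat /= (leq_ltn_trans (leq_pred _) (ltn_ord i)).
Qed.

Lemma join_block_path l (g : nat -> R) (i : 'I_l) :
  join_block (path_adj l) (fun j => g j) i =
  (if (0 < i)%N then g i.-1 else 0) + (if (i.+1 < l)%N then g i.+1 else 0) +
  (1 + (0 < i)%N%:R + (i.+1 < l)%N%:R) * g i.
Proof.
rewrite /join_block sum_path_adj_col; congr (_ + _ * _); rewrite natrD -addrA; congr (_ + _).
have -> : (deg (path_adj l) i)%:R = \sum_(j < l) (fun _ => 1 : R) j * (path_adj l j i)%:R.
  by rewrite /deg natr_sum; apply: eq_bigr => j _; rewrite mul1r path_adj_sym.
by rewrite (sum_path_adj_col (fun _ => 1)); case: (0 < i)%N; case: (i.+1 < l)%N.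
Qed.

(* Solves [(3 + r + r^-1) a_k = 1 + a_(k-1) + a_(k+1) + 3 a_k] on [P_l], with
   the adjustments at the two end vertices: [cycle_weight r] solves the interior
   equation, and the multiple of the symmetric homogeneous solution
   [r ^+ k.+1 + r ^+ (l - k)] is fixed by the end equations. *)
Definition path_weight (r : R) l k :=
  cycle_weight r - cycle_weight r * (2 / ((1 + r) * (1 + r ^+ l))) * (r ^+ k.+1 + r ^+ (l - k)).

Lemma join_block_path_weight r l (i : 'I_l) : 1 < r ->
  (3 + r + r^-1) * path_weight r l i = 1 + join_block (path_adj l) (path_weight r l) i.
Proof.
move=> r_gt1; rewrite join_block_path.
have r_gt0 : 0 < r by apply: lt_trans r_gt1.
have r_neq0 : r != 0 by rewrite gt_eqF.
have r1_neq0 : r - 1 != 0 by rewrite subr_eq0 gt_eqF.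
have r1'_neq0 : 1 + r != 0 by rewrite gt_eqF //; lra.
have rk_neq0 k : 1 + r ^+ k != 0 by rewrite gt_eqF //; have := exprn_gt0 k r_gt0; lra.
case: i => i /= il; have [p ->] : exists p, l = (i + p.+1)%N by exists (l - i.+1)%N; lia.
rewrite /path_weight /cycle_weight.
case: i il => [|j] _; case: p => [|q] /=.
- by rewrite /= !subn0 !expr1; field; rewrite r1'_neq0 r1_neq0 r_neq0.
- have -> : (0 + q.+2 - 1 = q.+1)%N by lia.
  rewrite !add0n subn0; have := rk_neq0 q.+2; rewrite !exprS => h.
  by field; rewrite h r1'_neq0 r1_neq0 r_neq0.
- have -> : (j.+1 + 1 = j.+2)%N by lia.
  have -> : (j.+2 - j.+1 = 1)%N by lia.
  have -> : (j.+2 - j = 2)%N by lia.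
  rewrite ltnn /=; have := rk_neq0 j.+2; rewrite !exprS => h.
  by field; rewrite h r1'_neq0 r1_neq0 r_neq0.
- have -> : (j.+1 + q.+2 = (j + q).+3)%N by lia.
  have -> : ((j + q).+3 - j.+1 = q.+2)%N by lia.
  have -> : ((j + q).+3 - j = q.+3)%N by lia.
  have -> : ((j + q).+3 - j.+2 = q.+1)%N by lia.
  have -> : (j.+2 < (j + q).+3)%N by lia.
  rewrite /= !exprS exprD; have := rk_neq0 (j + q).+3; rewrite !exprS exprD => h.
  by field; rewrite h r1'_neq0 r1_neq0 r_neq0.
Qed.

Lemma sum_path_weight (r : R) l : 1 < r -> \sum_(i < l) path_weight r l i =
  l%:R * cycle_weight r -
  cycle_weight r * (2 / ((1 + r) * (1 + r ^+ l))) * (2 * r * (r ^+ l - 1) / (r - 1)).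
Proof.
move=> r_gt1; have r1_neq0 : r - 1 != 0 by rewrite subr_eq0 gt_eqF.
rewrite /path_weight sumrB sumr_const card_ord -mulr_natl -mulr_sumr big_split /=.
have -> : \sum_(i < l) r ^+ (l - i) = \sum_(i < l) r ^+ i.+1.
  by rewrite (reindex_inj rev_ord_inj); apply: eq_bigr => i _; rewrite /= subKn.
rewrite subrX1; congr (_ - _ * _); first by rewrite mulr_natl.
by under eq_bigr do rewrite exprS; rewrite -mulr_sumr; field.
Qed.

Lemma sum_path_weight_lt (r : R) l l' : 1 < r -> (l' < l)%N ->
  \sum_(i < l) path_weight r l i < (l - l')%:R * cycle_weight r + \sum_(i < l') path_weight r l' i.
Proof.
move=> r_gt1 ll'; rewrite !sum_path_weight // natrB ?(ltnW ll') //.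
have r_gt0 : 0 < r by apply: lt_trans r_gt1.
have r1_gt0 : 0 < r - 1 by rewrite subr_gt0.
have lt_rl : r ^+ l' < r ^+ l by rewrite ltr_eXn2l.
have rl'_gt0 : 0 < r ^+ l' by rewrite exprn_gt0.
move: lt_rl rl'_gt0; rewrite /cycle_weight; set a := r ^+ l'; set b := r ^+ l => lt_ab a_gt0.
rewrite -subr_gt0; set lhs := (X in 0 < X).
have -> : lhs = 8 * r ^+ 2 * (b - a) / ((r - 1) ^+ 3 * (1 + r) * (1 + a) * (1 + b)).
  by rewrite /lhs; field; rewrite ?gt_eqF //; lra.
by rewrite divr_gt0 // ?mulr_gt0 ?exprn_gt0 ?subr_gt0 //; lra.
Qed.

End Path.


Lemma gt5_param (R : rcfType) (x : R) : 5 < x -> exists2 r, 1 < r & x = 3 + r + r^-1.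
Proof.
move=> x_gt5; set t := x - 3; set sq := Num.sqrt (t ^+ 2 - 4).
have sq_ge0 : 0 <= sq := sqrtr_ge0 _.
have sqE : sq ^+ 2 = t ^+ 2 - 4 by rewrite sqr_sqrtr //; rewrite /t; nra.
have r_gt1 : 1 < (t + sq) / 2 by rewrite /t; lra.
exists ((t + sq) / 2) => //.
have -> : ((t + sq) / 2)^-1 = (t - sq) / 2.
  apply: (mulfI (x := (t + sq) / 2)); first by rewrite gt_eqF //; lra.
  by rewrite mulfV ?gt_eqF //; [apply/esym; nra | lra].
by rewrite /t; field.
Qed.

Lemma join_path_lt_join_cycle_path (R : rcfType) (l n s : nat) (A1 : 'M[nat]_n) :
  (4 <= l)%N -> (forall i j, A1 i j = A1 j i) -> (2 <= s)%N -> (s <= l - 2)%N ->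
  exists x y : R,
    largest_eigenvalue (signless_laplacian R (join1 (dunion (path_adj l) A1))) x /\
    largest_eigenvalue (signless_laplacian R
       (join1 (dunion (dunion (cycle_adj s) (path_adj (l - s))) A1))) y /\
    x < y.
Proof.
move=> l_ge4 A1sym s_ge2 s_le.
have B'sym := dunion_sym (@cycle_adj_sym s) (@path_adj_sym (l - s)).
have Bsym := @path_adj_sym l.
have [x xtop bound] := symmetric_top_eigenvalue (signless_laplacian_join_sym R Bsym A1sym).
have [y ytop bound'] := symmetric_top_eigenvalue (signless_laplacian_join_sym R B'sym A1sym).
exists x, y; do 2!split=> //.
have path_edge : (1 < l)%N by lia.
have [r r_gt1 xE] := gt5_param (join_top_gt5 l_ge4 (sum_deg_path_adj_gt0 path_edge) bound).
apply: (join_top_lt (al := path_weight r l)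
  (al' := dunion_vec (fun _ => cycle_weight r) (path_weight r (l - s)))
  Bsym A1sym (proj1 xtop) bound _ _ _ bound').
- by move=> i; rewrite xE join_block_path_weight.
- move=> k; rewrite xE -(splitK k); case: (split k) => [i|j] /=.
    rewrite join_block_dunion_l (eq_join_block _ (dunion_vec_l _ _)) dunion_vec_l.
    exact: join_block_cycle_weight.
  rewrite join_block_dunion_r (eq_join_block _ (dunion_vec_r _ _)) dunion_vec_r.
  exact: join_block_path_weight.
rewrite sum_dunion_vec sumr_const card_ord subnKC; last by lia.
rewrite ltrD2l -mulr_natl -{1}(subKn (_ : s <= l)%N); last by lia.
by apply: sum_path_weight_lt; last by lia.
Qed.

Theorem lemma3p7 (R : rcfType) (l n : nat) (A1 : 'M[nat]_n) :
  (4 <= l)%N -> loopless_multigraph A1 ->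
  ((5 <= l)%N -> forall s : nat, (3 <= s)%N -> (s <= l - 2)%N ->
     exists x y : R,
       largest_eigenvalue (signless_laplacian R (join1 (dunion (path_adj l) A1))) x /\
       largest_eigenvalue (signless_laplacian R
          (join1 (dunion (dunion (cycle_adj s) (path_adj (l - s))) A1))) y /\
       x < y) /\
  (l = 4%N ->
     exists x y : R,
       largest_eigenvalue (signless_laplacian R (join1 (dunion (path_adj l) A1))) x /\
       largest_eigenvalue (signless_laplacian R
          (join1 (dunion (dunion (cycle_adj 2) (path_adj 2)) A1))) y /\
       x < y).
Proof.
move=> l_ge4 [A1sym _]; split=> [l_ge5 s s_ge3 s_le | ->].
  by apply: join_path_lt_join_cycle_path => //; apply: ltnW.
exact: join_path_lt_join_cycle_path.
Qed.
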